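(* Let $G$ be an NC-spectrum graph with nodes $x_0,\dots,x_k,y_k,\dots,y_0$, and let $M$, $\mathrm{lce}$ and $\mathrm{dia}$ be as defined in the context. Given the values $\mathrm{lce}(z)$ and $\mathrm{dia}(z)$ for all nodes $z$ (each accessible in $O(1)$ time), any entry $M(i,j)$, $0\le i,j\le k$, can be computed in $O(1)$ time.
   Context: Fix a finite set $\mathcal{R}$ of positive reals (the amino acid masses). A real $m$ is an amino-acid mass sum if $m=r_1+\cdots+r_t$ for some $t\ge1$, $r_i\in\mathcal{R}$ (repetitions allowed). Given a peptide mass $W$ and $k$ ion masses $w_1,\dots,w_k$, the NC-spectrum graph $G=(V,E)$ has vertex set $V=\{N_0,\dots,N_k,C_0,\dots,C_k\}$ with coordinates $\mathrm{cord}(N_0)=0$, $\mathrm{cord}(C_0)=W-18$, $\mathrm{cord}(N_j)=w_j-1$, $\mathrm{cord}(C_j)=W-w_j$ ($1\le j\le k$); for $j\ge1$, $N_j,C_j$ are derived from the $j$-th ion. There is an edge from $u$ to $v$ ($E(u,v)=1$, else $0$) iff $u,v$ are not derived from the same ion, $\mathrm{cord}(u)<\mathrm{cord}(v)$, and $\mathrm{cord}(v)-\mathrm{cord}(u)$ is an amino-acid mass sum. The nodes are listed in increasing coordinate order as $x_0,\dots,x_k,y_k,\dots,y_0$, with $x_0=N_0$, $y_0=C_0$ and $\{x_j,y_j\}$ the pair derived from one ion ($j\ge1$); every edge goes from a node to a later node in this list. The table $M$: for $0\le i,j\le k$, $M(i,j)=1$ if there exist a directed path $L$ from $x_0$ to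 $x_i$ and a directed path $R$ from $y_j$ to $y_0$ (a path may be a single node) such that $L\cup R$ contains exactly one of $x_p$ and $y_p$ for every $1\le p\le\max(i,j)$, and $M(i,j)=0$ otherwise. For $0\le i\le k$: $\mathrm{lce}(x_i)=j-i$ where $j\ge i$ is the largest index with $E(x_i,x_{i+1})=\dots=E(x_{j-1},x_j)=1$ (so $j=k$ or $E(x_j,x_{j+1})=0$); $\mathrm{lce}(y_i)=i-j$ where $j\le i$ is the smallest index with $E(y_i,y_{i-1})=\dots=E(y_{j+1},y_j)=1$ (so $j=0$ or $E(y_j,y_{j-1})=0$). Also $\mathrm{dia}(x_j)=M(j,j-1)$ and $\mathrm{dia}(y_j)=M(j-1,j)$ for $0<j\le k$, and $\mathrm{dia}(x_0)=\mathrm{dia}(y_0)=1$. *)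

From mathcomp Require Import all_boot all_order all_algebra.
From mathcomp Require Import reals.
Set Implicit Arguments. Unset Strict Implicit. Unset Printing Implicit Defensive.
Import Order.TTheory GRing.Theory Num.Theory.
Local Open Scope ring_scope.

(* Nodes of the NC-spectrum graph, named by their position in the sorted
   listing x_0,...,x_k,y_k,...,y_0:  (false, i) = x_i,  (true, i) = y_i. *)
Definition node := (bool * nat)%type.
Definition xn (i : nat) : node := (false, i).
Definition yn (i : nat) : node := (true, i).
Definition ion (u : node) : nat := u.2.
Definition valid (k : nat) (u : node) : Prop := (ion u <= k)%N.
(* position in the listing x_0,...,x_k,y_k,...,y_0 *)
Definition pos (k : nat) (u : node) : nat :=
  if u.1 then (2 * k + 1 - u.2)%N else u.2.

Definition aa_sum (R : realType) (A : seq R) (m : R) : Prop :=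
  exists t : seq R, t != [::] /\ all (fun r => r \in A) t /\ m = \sum_(r <- t) r.

Definition cord (R : realType) (cx cy : nat -> R) (u : node) : R :=
  if u.1 then cy u.2 else cx u.2.

(* x_j, y_j (j >= 1) are derived from the same (j-th) ion; x_0 = N_0, y_0 = C_0 are not *)
Definition same_ion (u v : node) : Prop := ion u = ion v /\ (1 <= ion u)%N.

Definition edge (R : realType) (A : seq R) (k : nat) (cx cy : nat -> R)
  (u v : node) : Prop :=
  valid k u /\ valid k v /\ ~ same_ion u v /\
  cord cx cy u < cord cx cy v /\ aa_sum A (cord cx cy v - cord cx cy u).

Fixpoint is_path (E : node -> node -> Prop) (u : node) (s : seq node) : Prop :=
  match s with
  | [::] => True
  | v :: s' => E u v /\ is_path E v s'
  end.

Definition Mtab (E : node -> node -> Prop) (i j : nat) : Prop :=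
  exists sL sR : seq node,
    is_path E (xn 0) sL /\ last (xn 0) sL = xn i /\
    is_path E (yn j) sR /\ last (yn j) sR = yn 0 /\
    let U := (xn 0 :: sL) ++ (yn j :: sR) in
    forall p : nat, (1 <= p <= maxn i j)%N -> (xn p \in U) != (yn p \in U).

Definition lce_spec (E : node -> node -> Prop) (k : nat) (z : node) (n : nat) : Prop :=
  let i := z.2 in
  if z.1 then
    (n <= i)%N /\ (forall m, (m < n)%N -> E (yn (i - m)) (yn (i - m - 1))) /\
    ((i - n = 0)%N \/ ~ E (yn (i - n)) (yn (i - n - 1)))
  else
    (i + n <= k)%N /\ (forall m, (m < n)%N -> E (xn (i + m)) (xn (i + m + 1))) /\
    ((i + n = k)%N \/ ~ E (xn (i + n)) (xn (i + n + 1))).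

Definition dia_spec (E : node -> node -> Prop) (z : node) (b : bool) : Prop :=
  let j := z.2 in
  if j == 0%N then b = true
  else if z.1 then (b <-> Mtab E (j - 1) j) else (b <-> Mtab E j (j - 1)).

From mathcomp Require Import all_boot all_order all_algebra.
From mathcomp Require Import reals.
From mathcomp Require Import zify.
Import Order.TTheory.
Set Implicit Arguments. Unset Strict Implicit. Unset Printing Implicit Defensive.

(* Positions strictly increase along edges, so the left path L of a witness
   for M(i,j) stays at positions <= i and the right path R at positions >= that
   of y_j.  For j < i the nodes x_(j+1), ..., x_i can therefore only be covered
   by L, which must end with the chain of edges x_(j+1) -> ... -> x_i;
   conversely such a chain can be appended to a witness for M(j+1,j).  Hence
   M(i,j) = dia(x_(j+1)) && (lce(x_(j+1)) >= i-j-1), symmetrically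
   M(i,j) = dia(y_(i+1)) && (lce(y_j) >= j-i-1) for i < j, while M(0,0) = 1 and
   M(i,i) = 0 for i >= 1 because L and R contain both x_i and y_i.  Only the
   order of the coordinates is used, not the masses. *)

Lemma iff_iter (P Q : nat -> Prop) (a b : nat) : (a <= b)%N ->
  (forall n, (a <= n < b)%N -> P n.+1 <-> P n /\ Q n) ->
  P b <-> P a /\ (forall n, (a <= n < b)%N -> Q n).
Proof.
elim: b => [|b IH] ab step.
  have -> : a = 0%N by lia.
  by split=> [P0|[]//]; split=> // n; lia.
have [->|ab1] := eqVneq a b.+1.
  by split=> [Pb|[]//]; split=> // n; lia.
rewrite step; last lia.
rewrite IH; [|lia|by move=> n nb; apply: step; lia].
split=> [[[Pa Qlt] Qb]|[Pa Qle]].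
  split=> // n /andP[an]; rewrite ltnS leq_eqVlt => /orP[/eqP-> //|nb].
  by apply: Qlt; lia.
by split; [split=> // n nb|]; apply: Qle; lia.
Qed.

Lemma is_path_rcons (E : node -> node -> Prop) u s v :
  is_path E u (rcons s v) <-> is_path E u s /\ E (last u s) v.
Proof. by elim: s u => [|h s IH] u /=; [tauto | rewrite IH; tauto]. Qed.

Lemma eq_xn a b : (xn a == xn b) = (a == b). Proof. by rewrite /xn xpair_eqE. Qed.
Lemma eq_yn a b : (yn a == yn b) = (a == b). Proof. by rewrite /yn xpair_eqE. Qed.
Lemma eq_xnyn a b : (xn a == yn b) = false. Proof. by []. Qed.
Lemma eq_ynxn a b : (yn a == xn b) = false. Proof. by []. Qed.

Lemma valid_xn k a : valid k (xn a) = (a <= k)%N. Proof. by []. Qed.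
Lemma valid_yn k a : valid k (yn a) = (a <= k)%N. Proof. by []. Qed.
Lemma pos_xn k a : pos k (xn a) = a. Proof. by []. Qed.
Lemma pos_yn k a : pos k (yn a) = (2 * k + 1 - a)%N. Proof. by []. Qed.

Lemma pos_inj k u v : valid k u -> valid k v -> pos k u = pos k v -> u = v.
Proof.
case: u => [[] a]; case: v => [[] b]; rewrite /valid /pos /ion /= => Ha Hb H;
  by [congr pair; lia | exfalso; lia].
Qed.

Lemma Mtab00 E : Mtab E 0 0.
Proof. by exists [::], [::]; do 4 split => //; move=> p; lia. Qed.

Lemma Mtab_diagS_false E i : ~ Mtab E i.+1 i.+1.
Proof.
case=> sL [sR [_ [LL [_ [_ cover]]]]].
have := cover i.+1; rewrite maxnn !mem_cat -LL mem_last mem_head orbT.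
by rewrite leqnn => /(_ isT).
Qed.

Lemma lce_xn_chain E k a b n : lce_spec E k (xn a) n -> (a <= b <= k)%N ->
  (forall p, (a <= p < b)%N -> E (xn p) (xn p.+1)) <-> (b - a <= n)%N.
Proof.
rewrite /lce_spec /= => -[_ [chain stop]] /andP[ab bk]; split=> [reach|le_n p /andP[ap pb]].
  rewrite leqNgt; apply/negP => lt_n.
  case: stop => [|]; first lia.
  by apply; rewrite addn1; apply: reach; lia.
by have := chain (p - a)%N; rewrite subnKC // addn1; apply; lia.
Qed.

Lemma lce_yn_chain E k a b n : lce_spec E k (yn b) n -> (a <= b)%N ->
  (forall p, (a <= p < b)%N -> E (yn p.+1) (yn p)) <-> (b - a <= n)%N.
Proof.
rewrite /lce_spec /= => -[n_le [chain stop]] ab; split=> [reach|le_n p /andP[ap pb]].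
  rewrite leqNgt; apply/negP => lt_n.
  case: stop => [|]; first lia.
  by apply; have := reach (b - n - 1)%N; rewrite (_ : ((b - n - 1).+1 = b - n)%N); [apply; lia | lia].
by have := chain (b - p.+1)%N; rewrite (_ : (b - (b - p.+1) = p.+1)%N) ?subn1 //; [apply | ]; lia.
Qed.

Definition dia_node (i j : nat) : node :=
  if (j < i)%N then xn j.+1 else if (i < j)%N then yn i.+1 else xn 0.
Definition lce_node (i j : nat) : node :=
  if (j < i)%N then xn j.+1 else if (i < j)%N then yn j else xn 0.
Definition query (i j : nat) (t : 'I_2) : node :=
  if t == ord0 then dia_node i j else lce_node i j.

Definition decide_Mtab (i j : nat) (lce : 'I_2 -> nat) (dia : 'I_2 -> bool) : bool :=
  if (j < i)%N then dia ord0 && (i - j.+1 <= lce ord_max)%N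
  else if (i < j)%N then dia ord0 && (j - i.+1 <= lce ord_max)%N
  else i == 0%N.

Lemma query_valid k i j t : (i <= k)%N -> (j <= k)%N -> valid k (query i j t).
Proof.
rewrite /query /dia_node /lce_node => ik jk.
by case: (t == ord0); case: ltngtP => ?; rewrite ?valid_xn ?valid_yn //; lia.
Qed.

Section ForwardGraph.
Variables (k : nat) (E : node -> node -> Prop).
Hypothesis edge_forward :
  forall u v, E u v -> [/\ valid k u, valid k v & (pos k u < pos k v)%N].

Lemma path_bounds u s v : is_path E u s -> valid k u -> v \in u :: s ->
  [/\ valid k v, (pos k u <= pos k v)%N & (pos k v <= pos k (last u s))%N].
Proof.
elim: s u v => [|h s IH] u v /=; first by move=> _ Vu; rewrite inE => /eqP->.
move=> [Euh Ph] Vu; have [_ Vh uh] := edge_forward Euh.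
rewrite in_cons => /orP[/eqP->|vs].
  by have [_ _] := IH h h Ph Vh (mem_head h s); split=> //; lia.
by have [Vv hv vl] := IH h v Ph Vh vs; split=> //; lia.
Qed.

Lemma Mtab_x_step i j : (j < i < k)%N ->
  Mtab E i.+1 j <-> Mtab E i j /\ E (xn i) (xn i.+1).
Proof.
move=> /andP[ji ik].
have Vyj : valid k (yn j) by rewrite valid_yn; lia.
split.
- case=> sL [sR [PL [LL [PR [LR cover]]]]].
  have offR v : v \in yn j :: sR -> (2 * k + 1 - j <= pos k v)%N.
    by case/(path_bounds PR Vyj).
  case/lastP: sL LL PL cover => [|s z]; first by case.
  rewrite last_rcons -rcons_cons => -> /is_path_rcons[Ps Ez] cover.
  have [Vl _ lt_l] := edge_forward Ez.
  have offL v : v \in xn 0 :: s -> (pos k v <= i)%N.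
    by case/(path_bounds Ps isT) => _ _; rewrite pos_xn in lt_l; lia.
  have yi_offL : yn i \notin xn 0 :: s by apply/negP => /offL; rewrite pos_yn; lia.
  have yi_offR : yn i \notin yn j :: sR by apply/negP => /offR; rewrite pos_yn; lia.
  have xi_offR : xn i \notin yn j :: sR by apply/negP => /offR; rewrite pos_xn; lia.
  have xi_on : xn i \in xn 0 :: s.
    have := cover i; rewrite !mem_cat !mem_rcons !(in_cons (xn i.+1)) eq_xn eq_ynxn.
    rewrite (negbTE yi_offL) (negbTE yi_offR) (negbTE xi_offR) orbF.
    by case: (_ \in _) => //; rewrite (_ : (i == i.+1) = false) //; lia.
  have last_s : last (xn 0) s = xn i.
    have [_ _ le_i] := path_bounds Ps isT xi_on.
    by apply: (@pos_inj k) => //; [rewrite valid_xn; lia | move: lt_l le_i; rewrite !pos_xn; lia].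
  split; last by rewrite -last_s.
  exists s, sR; do 4 (split; first by []); move=> U p /andP[p_gt0 p_le]; rewrite {}/U.
  have := cover p; rewrite !mem_cat !mem_rcons !(in_cons (xn i.+1)) eq_xn eq_ynxn.
  by rewrite (_ : (p == i.+1) = false) /=; [apply; lia | lia].
- case=> [[sL [sR [PL [LL [PR [LR cover]]]]]] Ei].
  have offL v : v \in xn 0 :: sL -> (pos k v <= i)%N.
    by case/(path_bounds PL isT); rewrite LL.
  have offR v : v \in yn j :: sR -> (2 * k + 1 - j <= pos k v)%N.
    by case/(path_bounds PR Vyj).
  exists (rcons sL (xn i.+1)), sR; split; first by apply/is_path_rcons; rewrite LL.
  split; first by rewrite last_rcons.
  do 2 (split; first by []); move=> U p /andP[p_gt0 p_le]; rewrite {}/U.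
  rewrite -rcons_cons !mem_cat !mem_rcons !(in_cons (xn i.+1)) eq_xn eq_ynxn /=.
  have [->|ne] := eqVneq p i.+1; last by have := cover p; rewrite !mem_cat; apply; lia.
  have /negbTE-> : yn i.+1 \notin xn 0 :: sL by apply/negP => /offL; rewrite pos_yn; lia.
  by have /negbTE-> : yn i.+1 \notin yn j :: sR by apply/negP => /offR; rewrite pos_yn; lia.
Qed.

Lemma Mtab_y_step i j : (i < j < k)%N ->
  Mtab E i j.+1 <-> Mtab E i j /\ E (yn j.+1) (yn j).
Proof.
move=> /andP[ij jk].
split.
- case=> sL [sR [PL [LL [PR [LR cover]]]]].
  have offL v : v \in xn 0 :: sL -> (pos k v <= i)%N.
    by case/(path_bounds PL isT); rewrite LL.
  case: sR PR LR cover => [_ [] //|h s [Eh Ps] LR cover].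
  have [_ Vh lt_h] := edge_forward Eh.
  have offR v : v \in h :: s -> (pos k h <= pos k v)%N by case/(path_bounds Ps Vh).
  have xj_offL : xn j \notin xn 0 :: sL by apply/negP => /offL; rewrite pos_xn; lia.
  have yj_offL : yn j \notin xn 0 :: sL by apply/negP => /offL; rewrite pos_yn; lia.
  have xj_offR : xn j \notin h :: s by apply/negP => /offR; rewrite pos_xn pos_yn in lt_h *; lia.
  have yj_on : yn j \in h :: s.
    have := cover j; rewrite !mem_cat !(in_cons (yn j.+1)) eq_xnyn eq_yn.
    rewrite (negbTE xj_offL) (negbTE yj_offL) (negbTE xj_offR).
    by case: (_ \in _) => //; rewrite (_ : (j == j.+1) = false) //; lia.
  have h_yj : h = yn j.
    have [_ le_j _] := path_bounds Ps Vh yj_on.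
    by apply: (@pos_inj k) => //; [rewrite valid_yn; lia | move: lt_h le_j; rewrite !pos_yn; lia].
  subst h; split=> //.
  exists sL, s; do 4 (split; first by []); move=> U p /andP[p_gt0 p_le]; rewrite {}/U.
  have := cover p; rewrite !mem_cat !(in_cons (yn j.+1)) eq_xnyn eq_yn.
  by rewrite (_ : (p == j.+1) = false) /=; [apply; lia | lia].
- case=> [[sL [sR [PL [LL [PR [LR cover]]]]]] Ej].
  have offL v : v \in xn 0 :: sL -> (pos k v <= i)%N.
    by case/(path_bounds PL isT); rewrite LL.
  have offR v : v \in yn j :: sR -> (2 * k + 1 - j <= pos k v)%N.
    by case/(path_bounds PR); rewrite ?valid_yn //; lia.
  exists sL, (yn j :: sR); do 4 (split; first by []); move=> U p /andP[p_gt0 p_le]; rewrite {}/U.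
  rewrite !mem_cat !(in_cons (yn j.+1)) eq_xnyn eq_yn /=.
  have [->|ne] := eqVneq p j.+1; last by have := cover p; rewrite !mem_cat; apply; lia.
  have /negbTE-> : xn j.+1 \notin xn 0 :: sL by apply/negP => /offL; rewrite pos_xn; lia.
  have /negbTE-> : xn j.+1 \notin yn j :: sR by apply/negP => /offR; rewrite pos_xn; lia.
  by rewrite orbT.
Qed.

Lemma Mtab_x_chain i j : (j < i <= k)%N ->
  Mtab E i j <-> Mtab E j.+1 j /\ (forall p, (j < p < i)%N -> E (xn p) (xn p.+1)).
Proof.
move=> /andP[ji ik].
apply: (iff_iter (P := fun n => Mtab E n j)) => // n /andP[jn ni].
by apply: Mtab_x_step; lia.
Qed.

Lemma Mtab_y_chain i j : (i < j <= k)%N ->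
  Mtab E i j <-> Mtab E i i.+1 /\ (forall p, (i < p < j)%N -> E (yn p.+1) (yn p)).
Proof.
move=> /andP[ij jk].
apply: (iff_iter (P := fun n => Mtab E i n)) => // n /andP[jn ni].
by apply: Mtab_y_step; lia.
Qed.

Lemma Mtab_decide (lce : node -> nat) (dia : node -> bool) i j :
  (forall z, valid k z -> lce_spec E k z (lce z)) ->
  (forall z, valid k z -> dia_spec E z (dia z)) ->
  (i <= k)%N -> (j <= k)%N ->
  Mtab E i j <->
    decide_Mtab i j (fun t => lce (query i j t)) (fun t => dia (query i j t)).
Proof.
move=> lceP diaP ik jk; rewrite /decide_Mtab /query /dia_node /lce_node /=.
case: ltngtP => [ji|ij|<-].
- have := diaP (xn j.+1); rewrite valid_xn /dia_spec /= subn1 /= => /(_ (leq_trans ji ik)) dia_M.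
  rewrite Mtab_x_chain; last lia.
  rewrite -dia_M (lce_xn_chain (lceP (xn j.+1) _)) ?valid_xn; [|lia|lia].
  exact: (rwP andP).
- have := diaP (yn i.+1); rewrite valid_yn /dia_spec /= subn1 /= => /(_ (leq_trans ij jk)) dia_M.
  rewrite Mtab_y_chain; last lia.
  rewrite -dia_M (lce_yn_chain (lceP (yn j) _)) ?valid_yn; [|lia|lia].
  exact: (rwP andP).
- by case: j jk => [|j] _; [split=> // _; apply: Mtab00 | split=> //; move/Mtab_diagS_false].
Qed.

End ForwardGraph.

Local Open Scope ring_scope.

Lemma edge_pos_lt (R : realType) (A : seq R) k cx cy :
  (forall u v, valid k u -> valid k v -> (pos k u <= pos k v)%N ->
     cord cx cy u <= cord cx cy v) ->
  forall u v, edge A k cx cy u v -> [/\ valid k u, valid k v & (pos k u < pos k v)%N].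
Proof.
move=> cord_mono u v [Vu [Vv [_ [lt_uv _]]]]; split=> //.
by rewrite ltnNge; apply/negP => /(cord_mono v u Vv Vu); rewrite leNgt lt_uv.
Qed.

Theorem lemma3 :
  exists (c : nat) (q : nat -> nat -> nat -> 'I_c -> node)
         (g : nat -> nat -> nat -> ('I_c -> nat) -> ('I_c -> bool) -> bool),
  forall (R : realType) (A : seq R) (W : R) (k : nat) (w : nat -> R)
         (cx cy : nat -> R),
    (forall r, r \in A -> 0 < r) ->
    cx 0%N = 0 -> cy 0%N = W - 18 ->
    (forall j, (1 <= j <= k)%N ->
       (cx j = w j - 1 /\ cy j = W - w j) \/ (cx j = W - w j /\ cy j = w j - 1)) ->
    (forall u v : node, valid k u -> valid k v -> (pos k u <= pos k v)%N ->
       cord cx cy u <= cord cx cy v) ->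
    forall (lce : node -> nat) (dia : node -> bool),
    (forall z, valid k z -> lce_spec (edge A k cx cy) k z (lce z)) ->
    (forall z, valid k z -> dia_spec (edge A k cx cy) z (dia z)) ->
    forall i j : nat, (i <= k)%N -> (j <= k)%N ->
      (forall t, valid k (q k i j t)) /\
      (Mtab (edge A k cx cy) i j <->
         g k i j (fun t => lce (q k i j t)) (fun t => dia (q k i j t)) = true).
Proof.
exists 2%N, (fun _ => query), (fun _ => decide_Mtab).
move=> R A W k w cx cy _ _ _ _ cord_mono lce dia lceP diaP i j ik jk.
split=> [t|]; first exact: query_valid.
exact: (Mtab_decide (edge_pos_lt cord_mono)).
Qed.
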